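(* Let $S=\langle n_k\rangle_{k=1}^{3m}$ be an instance of 3-Partition (with $n_1\ge\cdots\ge n_{3m}$) and let $\mathrm{Ver}_S$, $w_S$ be as defined below. If $\langle i_k\rangle_{k=1}^{3m}$ is a permutation (reordering) of $\langle n_k\rangle_{k=1}^{3m}$, then the configuration $\prod_{k=1}^{3m}(a_1b^{i_k}a_2)\,\|\,\mathrm{Ver}_S$ is accepted. Consequently, if $S$ is a ''yes'' instance of 3-Partition, then $\varepsilon\,\|\,w_S\vdash^*\varepsilon\,\|\,\varepsilon$ and $w_S$ is a square.
   Context: Queue automaton: a configuration is written $Q\,\|\,x$ ($Q$ = queue contents, $x$ = remaining input); a step from $Q\,\|\,\sigma x$ ($\sigma$ a symbol) goes either to $Q\sigma\,\|\,x$ (push) or, if $Q=\sigma Q'$, to $Q'\,\|\,x$ (match/pop). $\vdash^*$ is zero or more steps; $\varepsilon$ is the empty string; a configuration $C$ is accepted if $C\vdash^*\varepsilon\,\|\,\varepsilon$. A string $w$ is a square if it is a shuffle of some string $u$ with itself, i.e. there are strings $x_i,y_i$ with $u=x_1\cdots x_k=y_1\cdots y_k$ and $w=x_1y_1\cdots x_ky_k$. An instance of 3-Partition is a sequence $S=\langle n_i:1\le i\le 3m\rangle$ of natural numbers such that $B=(\sum_{i=1}^{3m}n_i)/m$ is an integer and $B/4<n_i<B/2$ for all $i$; it is a ''yes'' instance if it can be partitioned into $m$ disjoint subsequences each having exactly three elements summing to $B$. Throughout, the $n_i$ are assumed to be in non-increasing order. The alphabet is $\{a_1,a_2,b,e_0,e,c_1,c_2,x,y\}$;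 $u^i$ denotes $i$ concatenated copies of $u$ and $\prod_{\ell=1}^k u_\ell=u_1u_2\cdots u_k$. Define $U_\ell=a_1^2b^\ell a_2^2$, $v_\ell=c_1x^\ell y^\ell c_2$, $D_k=U_{n_k}^{3m-k+1}$, $E_k=U_B^{3m-k}\,a_1b^{n_k}a_2\,U_B^{3m-k}$, $F_k=U_B^{2(3m-k)}$, and $\mathrm{Load}_S=e_0\prod_{i=1}^m(b^{2B}e)$, $\mathrm{Dist}_S=e_0\prod_{i=1}^m((a_1b^Ba_2)^3e)$, $\mathrm{Ver}_S=\prod_{k=1}^{3m}[v_{4k-3}D_kv_{4k-3}\,v_{4k-2}D_kv_{4k-2}\,v_{4k-1}E_kv_{4k-1}\,v_{4k}F_kv_{4k}]$, and $w_S=\mathrm{Load}_S\mathrm{Dist}_S\mathrm{Ver}_S$. *)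

From HB Require Import structures.
From mathcomp Require Import all_boot.
Set Implicit Arguments. Unset Strict Implicit. Unset Printing Implicit Defensive.

Inductive sym := a1 | a2 | b | e0 | e | c1 | c2 | x | y.

Definition sym_code (s : sym) : nat :=
  match s with a1 => 0 | a2 => 1 | b => 2 | e0 => 3 | e => 4
  | c1 => 5 | c2 => 6 | x => 7 | y => 8 end.
Definition sym_decode (n : nat) : option sym :=
  match n with 0 => Some a1 | 1 => Some a2 | 2 => Some b | 3 => Some e0
  | 4 => Some e | 5 => Some c1 | 6 => Some c2 | 7 => Some x | 8 => Some y
  | _ => None end.
Lemma sym_codeK : pcancel sym_code sym_decode. Proof. by case. Qed.
HB.instance Definition _ := Countable.copy sym (pcan_type sym_codeK).

Definition word := seq sym.

(* Configuration Q || w : (queue contents, remaining input). *)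
Definition config := (word * word)%type.

Inductive qstep : config -> config -> Prop :=
| qpush (Q : word) (s : sym) (w : word) : qstep (Q, s :: w) (rcons Q s, w)
| qpop  (Q : word) (s : sym) (w : word) : qstep (s :: Q, s :: w) (Q, w).

Inductive qsteps : config -> config -> Prop :=
| qsteps_refl C : qsteps C C
| qsteps_step C1 C2 C3 : qstep C1 C2 -> qsteps C2 C3 -> qsteps C1 C3.

Definition accepted (C : config) : Prop := qsteps C ([::], [::]).

(* w is a shuffle of some u with itself: u = x_1..x_k = y_1..y_k,
   w = x_1 y_1 ... x_k y_k. *)
Definition is_square (w : word) : Prop :=
  exists (xs ys : seq word),
    size xs = size ys /\ flatten xs = flatten ys /\
    w = flatten [seq p.1 ++ p.2 | p <- zip xs ys].

Definition m_of (S : seq nat) : nat := size S %/ 3.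
Definition B_of (S : seq nat) : nat := sumn S %/ m_of S.

Definition three_partition_instance (S : seq nat) : Prop :=
  [/\ size S = 3 * m_of S, 0 < m_of S, m_of S %| sumn S &
      forall n, n \in S -> B_of S < 4 * n /\ 2 * n < B_of S].

Definition three_partition_yes (S : seq nat) : Prop :=
  exists T : seq (seq nat),
    [/\ size T = m_of S,
        all (fun t => (size t == 3) && (sumn t == B_of S)) T &
        perm_eq (flatten T) S].

Definition pw (u : word) (i : nat) : word := flatten (nseq i u).
Definition bigcat (lo hi : nat) (f : nat -> word) : word :=
  flatten [seq f k | k <- iota lo (hi.+1 - lo)].

Definition U (l : nat) : word := [:: a1; a1] ++ nseq l b ++ [:: a2; a2].
Definition vv (l : nat) : word := c1 :: nseq l x ++ nseq l y ++ [:: c2].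

Section Words.
Variable S : seq nat.
Let m := m_of S.
Let B := B_of S.
(* n_k, k = 1..3m *)
Definition nk (k : nat) : nat := nth 0 S k.-1.

Definition Dk (k : nat) : word := pw (U (nk k)) (3 * m - k + 1).
Definition Ek (k : nat) : word :=
  pw (U B) (3 * m - k) ++ [:: a1] ++ nseq (nk k) b ++ [:: a2] ++ pw (U B) (3 * m - k).
Definition Fk (k : nat) : word := pw (U B) (2 * (3 * m - k)).

Definition Load : word := e0 :: bigcat 1 m (fun _ => nseq (2 * B) b ++ [:: e]).
Definition Dist : word :=
  e0 :: bigcat 1 m (fun _ => pw ([:: a1] ++ nseq B b ++ [:: a2]) 3 ++ [:: e]).
Definition Ver : word :=
  bigcat 1 (3 * m) (fun k =>
    vv (4 * k - 3) ++ Dk k ++ vv (4 * k - 3) ++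
    vv (4 * k - 2) ++ Dk k ++ vv (4 * k - 2) ++
    vv (4 * k - 1) ++ Ek k ++ vv (4 * k - 1) ++
    vv (4 * k) ++ Fk k ++ vv (4 * k)).
Definition wS : word := Load ++ Dist ++ Ver.
End Words.

Definition queue_of (I : seq nat) : word :=
  flatten [seq [:: a1] ++ nseq i b ++ [:: a2] | i <- I].

From Pilot Require Import Defs.
From mathcomp Require Import all_boot.
From mathcomp Require Import zify.
Set Implicit Arguments. Unset Strict Implicit.

(* Round k of Ver_S starts with the queue holding the blocks a1 b^i a2 for the
   multiset {n_k, ..., n_3m}, of which n_k is the largest.  Each U_{n_k} of a
   D_k pass matches one block a1 b^i a2 and pushes its complement
   a1 b^(n_k - i) a2, so the two D_k passes restore the queue.  In E_k the
   block of n_k is popped while the other blocks are complemented with respect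
   to B and copies of U_B are parked behind them; F_k complements back and pops
   the parked copies, leaving the blocks of {n_(k+1), ..., n_3m}.  Each segment
   is fenced by a word v_j which is pushed before it and popped right after.
   For w_S, Load_S is pushed, and Dist_S turns each b^(2B) e into the three blocks
   of a triple of the partition, since popping b^(B-p) from a1 b^B a2 pushes
   a1 b^p a2.  Finally, splitting the input of any accepting run into its
   pushed and popped letters shows that it is a shuffle of one word with
   itself. *)

Lemma qsteps_trans C1 C2 C3 : qsteps C1 C2 -> qsteps C2 C3 -> qsteps C1 C3.
Proof. elim=> [//|? ? ? h _ ih] h2; exact: qsteps_step h (ih h2). Qed.

(* [interleaving W P Q]: W is a shuffle of P and Q; reading W, the letters of P
   are matched against the queue and those of Q are pushed. *)
Inductive interleaving : word -> word -> word -> Prop :=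
| interleaving_nil : interleaving [::] [::] [::]
| interleaving_pop s W P Q :
    interleaving W P Q -> interleaving (s :: W) (s :: P) Q
| interleaving_push s W P Q :
    interleaving W P Q -> interleaving (s :: W) P (s :: Q).

Lemma interleaving_qsteps W P Q R r :
  interleaving W P Q -> qsteps (P ++ R, W ++ r) (R ++ Q, r).
Proof.
move=> hW; elim: hW R => [R|s W' P' Q' _ ih R|s W' P' Q' _ ih R] /=.
- rewrite cats0; exact: qsteps_refl.
- exact: qsteps_step (qpop _ _ _) (ih R).
- apply: qsteps_step (qpush _ _ _) _.
  by rewrite rcons_cat -cat_rcons; exact: ih.
Qed.

Lemma interleaving_cat W1 P1 Q1 W2 P2 Q2 :
  interleaving W1 P1 Q1 -> interleaving W2 P2 Q2 ->
  interleaving (W1 ++ W2) (P1 ++ P2) (Q1 ++ Q2).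
Proof. by move=> h1 h2; elim: h1 => //= *; constructor. Qed.

Lemma interleaving_pop_all W : interleaving W W [::].
Proof. by elim: W => *; constructor. Qed.

Lemma interleaving_push_all W : interleaving W [::] W.
Proof. by elim: W => *; constructor. Qed.

Lemma interleaving_cat_pop_push W1 W2 : interleaving (W1 ++ W2) W1 W2.
Proof. by elim: W1 => [|s W1 ih] /=; [exact: interleaving_push_all | constructor]. Qed.

Lemma interleaving_flatten (T : eqType) (f g h : T -> word) (s : seq T) :
  {in s, forall t, interleaving (f t) (g t) (h t)} ->
  interleaving (flatten (map f s)) (flatten (map g s)) (flatten (map h s)).
Proof.
elim: s => [_|t s ih hs] /=; first exact: interleaving_nil.
apply: interleaving_cat; first by apply: hs; rewrite mem_head.
by apply: ih => u hu; apply: hs; rewrite in_cons hu orbT.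
Qed.

(* The fence v is pushed behind Q; it reaches the front once W has consumed Q. *)
Lemma qsteps_fenced v W Q Q' r :
  interleaving W Q Q' -> qsteps (Q, v ++ W ++ v ++ r) (Q', r).
Proof.
move=> hW.
apply: qsteps_trans (interleaving_qsteps Q _ (interleaving_push_all v)) _.
apply: qsteps_trans (interleaving_qsteps v _ hW) _.
by have := interleaving_qsteps Q' r (interleaving_pop_all v); rewrite cats0.
Qed.

Lemma pwD u n1 n2 : pw u (n1 + n2) = pw u n1 ++ pw u n2.
Proof. by rewrite /pw nseqD flatten_cat. Qed.

Lemma pw_size (T : Type) u (s : seq T) :
  pw u (size s) = flatten [seq u | _ <- s].
Proof. by elim: s => //= _ s <-. Qed.

Definition block (i : nat) : word := [:: a1] ++ nseq i b ++ [:: a2].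

Lemma queue_of_cat I1 I2 : queue_of (I1 ++ I2) = queue_of I1 ++ queue_of I2.
Proof. by rewrite /queue_of map_cat flatten_cat. Qed.

Lemma queue_of_flatten T : queue_of (flatten T) = flatten (map queue_of T).
Proof. by elim: T => //= t T ih; rewrite queue_of_cat ih. Qed.

Lemma nseq_split (T : Type) (s : T) n i :
  i <= n -> nseq n s = nseq i s ++ nseq (n - i) s.
Proof. by move=> hi; rewrite -nseqD subnKC. Qed.

Lemma interleaving_U l i : i <= l -> interleaving (U l) (block i) (block (l - i)).
Proof.
move=> hi; rewrite /U /block (nseq_split b hi) /=.
do 2 constructor; rewrite -catA.
apply: interleaving_cat (interleaving_pop_all _) _.
exact: interleaving_cat (interleaving_push_all _)
         (interleaving_pop a2 (interleaving_push a2 interleaving_nil)).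
Qed.

Lemma interleaving_pw_U l I : {in I, forall i, i <= l} ->
  interleaving (pw (U l) (size I)) (queue_of I) (queue_of [seq l - i | i <- I]).
Proof.
move=> hI; rewrite pw_size /queue_of -map_comp.
by apply: interleaving_flatten => i /hI; exact: interleaving_U.
Qed.

Lemma interleaving_pw_U_compl l I : {in I, forall i, i <= l} ->
  interleaving (pw (U l) (size I)) (queue_of [seq l - i | i <- I]) (queue_of I).
Proof.
move=> hI.
have compK : [seq l - i | i <- [seq l - i | i <- I]] = I.
  by rewrite -map_comp; apply: map_id_in => i /hI /=; exact: subKn.
have := @interleaving_pw_U l [seq l - i | i <- I]; rewrite size_map compK.
by apply=> _ /mapP [j _ ->]; exact: leq_subr.
Qed.

Definition Eword (Bv n s : nat) : word :=
  pw (U Bv) s ++ [:: a1] ++ nseq n b ++ [:: a2] ++ pw (U Bv) s.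

(* E pops the block of n, complements the blocks of I1 and I2 with respect to
   Bv and parks the copies of U_Bv meant for the other side. *)
Definition queue_after_E (Bv : nat) (I1 I2 : seq nat) : word :=
  queue_of [seq Bv - i | i <- I1] ++ pw (U Bv) (size I2) ++
  queue_of [seq Bv - i | i <- I2] ++ pw (U Bv) (size I1).

Section ERound.
Variables (Bv : nat) (I1 I2 : seq nat).
Hypothesis le_Bv : {in I1 ++ I2, forall i, i <= Bv}.

Let le_Bv1 : {in I1, forall i, i <= Bv}.
Proof. by move=> i hi; apply: le_Bv; rewrite mem_cat hi. Qed.

Let le_Bv2 : {in I2, forall i, i <= Bv}.
Proof. by move=> i hi; apply: le_Bv; rewrite mem_cat hi orbT. Qed.

Lemma interleaving_Eword n :
  interleaving (Eword Bv n (size I1 + size I2))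
    (queue_of (I1 ++ n :: I2)) (queue_after_E Bv I1 I2).
Proof.
rewrite /Eword {2}(addnC (size I1)) !pwD queue_of_cat -!catA.
rewrite (catA (nseq n b)) (catA [:: a1]).
apply: interleaving_cat (interleaving_pw_U le_Bv1) _.
apply: interleaving_cat (interleaving_push_all _) _.
apply: interleaving_cat (interleaving_pop_all (block n)) _.
have := interleaving_cat (interleaving_pw_U le_Bv2) (interleaving_push_all _).
by rewrite cats0; apply.
Qed.

Lemma interleaving_Fword :
  interleaving (pw (U Bv) (2 * (size I1 + size I2)))
    (queue_after_E Bv I1 I2) (queue_of (I1 ++ I2)).
Proof.
have -> : 2 * (size I1 + size I2) = size I1 + (size I2 + (size I2 + size I1)).
  by lia.
rewrite !pwD queue_of_cat.
apply: interleaving_cat (interleaving_pw_U_compl le_Bv1) _.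
apply: interleaving_cat (interleaving_pop_all _) _.
have := interleaving_cat (interleaving_pw_U_compl le_Bv2) (interleaving_pop_all _).
by rewrite cats0.
Qed.

End ERound.

Definition round (g1 g2 g3 g4 : word) (Bv n s : nat) : word :=
  g1 ++ pw (U n) (s + 1) ++ g1 ++ g2 ++ pw (U n) (s + 1) ++ g2 ++
  g3 ++ Eword Bv n s ++ g3 ++ g4 ++ pw (U Bv) (2 * s) ++ g4.

Lemma qsteps_round g1 g2 g3 g4 Bv n I1 I2 r :
  {in I1 ++ I2, forall i, i <= n} -> n <= Bv ->
  qsteps (queue_of (I1 ++ n :: I2), round g1 g2 g3 g4 Bv n (size I1 + size I2) ++ r)
         (queue_of (I1 ++ I2), r).
Proof.
move=> le_n le_nB; set I := I1 ++ n :: I2.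
have le_nI : {in I, forall i, i <= n}.
  move=> i; rewrite (perm_mem (permEl (perm_catCA I1 [:: n] I2))) in_cons.
  by case/orP=> [/eqP -> //|]; exact: le_n.
have le_B : {in I1 ++ I2, forall i, i <= Bv}.
  by move=> i /le_n /leq_trans; apply.
rewrite /round; move: (Eword _ _ _) (interleaving_Eword le_B n) => E hE.
rewrite -!catA.
have -> : size I1 + size I2 + 1 = size I by rewrite size_cat /=; lia.
apply: qsteps_trans (qsteps_fenced _ _ (interleaving_pw_U le_nI)) _.
apply: qsteps_trans (qsteps_fenced _ _ (interleaving_pw_U_compl le_nI)) _.
apply: qsteps_trans (qsteps_fenced _ _ hE) _.
exact: qsteps_fenced (interleaving_Fword le_B).
Qed.

Section Rounds.
Variables (g1 g2 g3 g4 : nat -> word) (Bv : nat) (s : seq nat).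
Hypotheses (s_sorted : sorted geq s) (s_le : {in s, forall n, n <= Bv}).

Lemma accepted_rounds k I : perm_eq I (drop k s) ->
  accepted (queue_of I, flatten [seq round (g1 j) (g2 j) (g3 j) (g4 j)
                                       Bv (nth 0 s j) (size s - j.+1)
                                   | j <- iota k (size s - k)]).
Proof.
move eq_c: (size s - k) => c; elim: c k I eq_c => [|c ih] k I hc hI.
  rewrite (@drop_oversize _ k) in hI; last by lia.
  by have /perm_size /size0nil -> := hI; exact: qsteps_refl.
have hk : k < size s by lia.
have hdrop := drop_nth 0 hk; set n := nth 0 s k in hdrop *.
have le_n : {in I, forall i, i <= n}.
  have := drop_sorted k s_sorted.
  rewrite hdrop /= => /(order_path_min (rev_trans leq_trans)) /allP le_rest i.
  by rewrite (perm_mem hI) hdrop in_cons => /orP [/eqP -> //|/le_rest].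
have hnI : n \in I by rewrite (perm_mem hI) hdrop mem_head.
case/splitPr: hnI hI le_n => I1 I2 hI le_n /=.
have hsize : size s - k.+1 = size I1 + size I2.
  by move: (perm_size hI); rewrite size_drop size_cat /=; lia.
have le_n' : {in I1 ++ I2, forall i, i <= n}.
  move=> i hi; apply: le_n.
  by rewrite (perm_mem (permEl (perm_catCA I1 [:: n] I2))) in_cons hi orbT.
have le_nB : n <= Bv by apply: s_le; rewrite mem_nth.
have hperm : perm_eq (I1 ++ I2) (drop k.+1 s).
  by rewrite -(perm_cons n) -hdrop; move: hI; rewrite (perm_catCA I1 [:: n] I2).
rewrite hsize; apply: qsteps_trans (qsteps_round _ _ _ _ _ le_n' le_nB) _.
by apply: ih hperm; lia.
Qed.

End Rounds.

Lemma Ver_rounds S :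
  Ver S = flatten [seq round (vv (4 * j.+1 - 3)) (vv (4 * j.+1 - 2))
                             (vv (4 * j.+1 - 1)) (vv (4 * j.+1))
                             (B_of S) (nth 0 S j) (3 * m_of S - j.+1)
                     | j <- iota 0 (3 * m_of S)].
Proof. by rewrite /Ver /bigcat subSS subn0 (iotaDl 1 0) -map_comp. Qed.

Lemma accepted_Ver S :
  size S = 3 * m_of S -> {in S, forall n, n <= B_of S} -> sorted geq S ->
  forall I, perm_eq I S -> accepted (queue_of I, Ver S).
Proof.
move=> hsize le_B hsorted I hI; rewrite Ver_rounds -hsize.
have := accepted_rounds (fun j => vv (4 * j.+1 - 3)) (fun j => vv (4 * j.+1 - 2))
          (fun j => vv (4 * j.+1 - 1)) (fun j => vv (4 * j.+1)) hsorted le_B (k := 0).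
by rewrite subn0 drop0; apply.
Qed.

Lemma interleaving_block_b Bv p :
  p <= Bv -> interleaving (block Bv) (nseq (Bv - p) b) (block p).
Proof.
move=> le_pB; rewrite /block (nseq_split b (leq_subr p Bv)) subKn // -catA /=.
by constructor; exact: interleaving_cat_pop_push.
Qed.

Lemma interleaving_pw_block Bv I : {in I, forall i, i <= Bv} ->
  interleaving (pw (block Bv) (size I)) (flatten [seq nseq (Bv - i) b | i <- I])
    (queue_of I).
Proof.
move=> le_B; rewrite pw_size.
by apply: interleaving_flatten => i /le_B; exact: interleaving_block_b.
Qed.

Lemma interleaving_triple Bv t : size t = 3 -> sumn t = Bv ->
  interleaving (pw (block Bv) 3 ++ [:: e]) (nseq (2 * Bv) b ++ [:: e]) (queue_of t).
Proof.
case: t => [|p [|q [|r [|]]]] // _ /= hsum.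
have le_B : {in [:: p; q; r], forall i, i <= Bv}.
  by move=> i; rewrite !inE => /or3P [] /eqP ->; lia.
have -> : nseq (2 * Bv) b = flatten [seq nseq (Bv - i) b | i <- [:: p; q; r]].
  by rewrite /= cats0 -!nseqD; congr nseq; lia.
have := interleaving_cat (interleaving_pw_block le_B) (interleaving_pop_all [:: e]).
by rewrite cats0.
Qed.

Lemma LoadE S : Defs.Load S = e0 :: pw (nseq (2 * B_of S) b ++ [:: e]) (m_of S).
Proof. by rewrite /Load /bigcat -pw_size size_iota subn1. Qed.

Lemma DistE S : Dist S = e0 :: pw (pw (block (B_of S)) 3 ++ [:: e]) (m_of S).
Proof. by rewrite /Dist /bigcat -pw_size size_iota subn1. Qed.

Lemma interleaving_Dist_Load S T :
  size T = m_of S -> all (fun t => (size t == 3) && (sumn t == B_of S)) T ->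
  interleaving (Dist S) (Defs.Load S) (queue_of (flatten T)).
Proof.
move=> hsize htriples; rewrite DistE LoadE -hsize !pw_size queue_of_flatten.
apply/interleaving_pop/interleaving_flatten => t /(allP htriples).
by case/andP=> /eqP h3 /eqP hsum; exact: interleaving_triple.
Qed.

Lemma accepted_wS S :
  size S = 3 * m_of S -> {in S, forall n, n <= B_of S} -> sorted geq S ->
  three_partition_yes S -> accepted ([::], wS S).
Proof.
move=> hsize le_B hsorted [T [hT htriples hperm]].
apply: qsteps_trans (interleaving_qsteps [::] _ (interleaving_push_all (Defs.Load S))) _.
have := interleaving_qsteps [::] (Ver S) (interleaving_Dist_Load hT htriples).
rewrite cats0 => /qsteps_trans; apply.
exact: accepted_Ver hperm.
Qed.

(* xs and ys record, step by step, the pushed and the popped letters. *)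
Lemma accepted_shuffle C : accepted C -> exists xs ys : seq word,
  [/\ size xs = size ys, C.1 ++ flatten xs = flatten ys &
      C.2 = flatten [seq p.1 ++ p.2 | p <- zip xs ys]].
Proof.
rewrite /accepted; move eC: ([::], [::]) => C0 hC.
elim: hC eC => [_ <-|C1 C2 C3 hstep _ ih /ih]; first by exists [::], [::].
case=> xs [ys [hsize hqueue hinput]].
case: hstep hqueue hinput => Q s w /= hqueue hinput.
- by exists ([:: s] :: xs), ([::] :: ys); rewrite /= hsize -hqueue -cat_rcons hinput.
- by exists ([::] :: xs), ([:: s] :: ys); rewrite /= hsize hqueue hinput.
Qed.

Lemma accepted_square w : accepted ([::], w) -> is_square w.
Proof. by case/accepted_shuffle=> xs [ys [? ? ?]]; exists xs, ys. Qed.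

Theorem lemma5 (S : seq nat) :
  three_partition_instance S ->
  sorted geq S ->
  (forall I : seq nat, perm_eq I S -> accepted (queue_of I, Ver S)) /\
  (three_partition_yes S -> accepted ([::], wS S) /\ is_square (wS S)).
Proof.
case=> hsize _ _ hbounds hsorted.
have le_B : {in S, forall n, n <= B_of S} by move=> n /hbounds; lia.
split; first exact: accepted_Ver.
move=> hyes; have acc := accepted_wS hsize le_B hsorted hyes.
by split; last exact: accepted_square.
Qed.
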